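(* Let $\mathbf A\in\mathcal S_{++}^n$, and let $(\mathbf W(t),\mathbf M(t))$ be a solution of the ODE $(\ast)$ with $\tau=\tfrac12$ and initial condition $(\mathbf W_0,\mathbf M_0)\in\mathcal D$. Then, for all $t\ge 0$, $$L(\mathbf W(t),\mathbf M(t))=L(\mathbf W_0,\mathbf M_0)\,e^{-8t}.$$
   Context: Let $n>k\ge1$ be integers. $\mathcal S_{++}^m$ denotes the $m\times m$ symmetric positive definite matrices; $\mathbf A\in\mathcal S_{++}^n$, and $\mathcal D:=\mathbb R^{k\times n}\times\mathcal S_{++}^k$. For a parameter $\tau>0$, consider the ODE $(\ast)$ on $\mathcal D$: $$\tfrac12\tfrac{d\mathbf W}{dt}=\mathbf M^{-1}\mathbf W\mathbf A-\mathbf W,\qquad \tau\tfrac{d\mathbf M}{dt}=\mathbf M^{-1}\mathbf W\mathbf A\mathbf W^\top\mathbf M^{-1}-\mathbf M.$$ A solution is a continuously differentiable map $[0,\infty)\to\mathcal D$ satisfying $(\ast)$. Define $L(\mathbf W,\mathbf M):=\|\mathbf W\mathbf W^\top-\mathbf M^2\|^2=\operatorname{tr}[(\mathbf W\mathbf W^\top-\mathbf M^2)^2]$, where $\|\cdot\|$ is the Frobenius norm. *)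

From HB Require Import structures.
From mathcomp Require Import all_boot all_order all_algebra.
From mathcomp Require Import all_classical all_reals all_analysis.
Set Implicit Arguments. Unset Strict Implicit. Unset Printing Implicit Defensive.
Import Order.TTheory GRing.Theory Num.Theory.
Import numFieldNormedType.Exports.
Local Open Scope classical_set_scope.
Local Open Scope ring_scope.

Definition posdef (R : realType) (m : nat) (M : 'M[R]_m) : Prop :=
  M^T = M /\ forall x : 'cV[R]_m, x != 0 -> 0 < (x^T *m M *m x) 0 0.

(* derivative of f at t relative to the domain [0, +oo) (one-sided at t = 0):
   lim_{h -> 0, h <> 0, t + h >= 0} h^-1 (f (t+h) - f t) = d *)
Definition has_deriv_nonneg (R : realType) (V : normedModType R)
  (f : R -> V) (t : R) (d : V) : Prop :=
  (fun h : R => h^-1 *: (f (t + h) - f t)) @ within (fun h : R => 0 <= t + h) 0^'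
    --> d.

Definition C1_nonneg (R : realType) (V : normedModType R) (f f' : R -> V) : Prop :=
  (forall t, 0 <= t -> has_deriv_nonneg f t (f' t)) /\
  {within `[0, +oo[, continuous f'}.

(* (W, M) : [0,oo) -> D = R^{k x n} x S_++^k is a solution of the ODE ( * )
   with parameter tau and data A *)
Definition is_solution (R : realType) (k n : nat) (A : 'M[R]_n) (tau : R)
  (W : R -> 'M[R]_(k, n)) (M : R -> 'M[R]_k) : Prop :=
  exists (W' : R -> 'M[R]_(k, n)) (M' : R -> 'M[R]_k),
    C1_nonneg W W' /\ C1_nonneg M M' /\
    (forall t, 0 <= t -> posdef (M t)) /\
    (forall t, 0 <= t ->
       (1 / 2) *: W' t = invmx (M t) *m W t *m A - W t /\
       tau *: M' t = invmx (M t) *m W t *m A *m (W t)^T *m invmx (M t) - M t).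

(* L(W, M) = || W W^T - M^2 ||_F^2 = tr[(W W^T - M^2)^2] *)
Definition Lobj (R : realType) (k n : nat) (W : 'M[R]_(k, n)) (M : 'M[R]_k) : R :=
  let D := W *m W^T - M *m M in \tr (D *m D).

(* Write D := W W^T - M^2, so that L = tr (D^2), and P := M^-1 W A W^T.  With
   tau = 1/2 the flow gives W' W^T = 2 (P - W W^T) and M' M = 2 (P - M^2), and the
   transposed products give P^T in place of P, so D' = -4 D: the P-terms cancel.
   Hence D t = e^(-4t) D 0 entrywise and L decays like e^(-8t).  The solution is
   only differentiable on [0, +oo) in the one-sided sense, which suffices: the
   derivative is two-sided for t > 0, and the mean value theorem together with
   right continuity at 0 propagates the invariant e^(4t) D t down to t = 0. *)

From HB Require Import structures.
From mathcomp Require Import all_boot all_order all_algebra.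
From mathcomp Require Import all_classical all_reals all_analysis.
From mathcomp Require Import ring.
Set Implicit Arguments. Unset Strict Implicit. Unset Printing Implicit Defensive.
Import Order.TTheory GRing.Theory Num.Theory.
Import numFieldNormedType.Exports.
Local Open Scope classical_set_scope.
Local Open Scope ring_scope.

Section OneSidedDerivative.
Variable R : realType.

Lemma has_deriv_nonneg_coord m n (f : R -> 'M[R]_(m, n)) t d i j :
  has_deriv_nonneg f t d -> has_deriv_nonneg (fun s => f s i j) t (d i j).
Proof.
move=> fd; rewrite /has_deriv_nonneg.
have -> : (fun h : R => h^-1 *: (f (t + h) i j - f t i j)) =
   (fun N : 'M[R]_(m, n) => N i j) \o (fun h : R => h^-1 *: (f (t + h) - f t)).
  by apply/funext => h /=; rewrite !mxE.
apply: cvg_comp; [exact: fd | exact: coord_continuous].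
Qed.

Lemma has_deriv_nonneg_is_derive (f : R -> R) t d :
  0 < t -> has_deriv_nonneg f t d -> is_derive t 1 f d.
Proof.
move=> t_gt0 fd.
have t_interior : (\forall h \near 0^', 0 <= t + h).
  apply: cvg_within; have : t + h @[h --> (0 : R)] --> t + 0.
    by apply: cvgD; [exact: cvg_cst | exact: cvg_id].
  rewrite addr0 => /cvgr_gt /(_ _ t_gt0).
  by apply: filterS => x /ltW.
have quot : h^-1 *: (f (t + h) - f t) @[h --> 0^'] --> d.
  move=> A /fd /= fA; apply: filter_app t_interior; exact: fA.
have quot' : h^-1 *: ((f \o shift t) (h *: 1) - f t) @[h --> 0^'] --> d.
  apply: cvg_trans quot; apply: near_eq_cvg; near=> h => /=.
  by rewrite (_ : h%:A = h) ?(addrC h) //; exact: mulr1.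
by apply: DeriveDef; [apply/cvg_ex; exists d | exact: cvg_lim quot'].
Unshelve. all: by end_near. Qed.

Lemma has_deriv_nonneg0_cvg (V : normedModType R) (f : R -> V) d :
  has_deriv_nonneg f 0 d -> f x @[x --> 0^'+] --> f 0.
Proof.
move=> fd.
have quot : h^-1 *: (f (0 + h) - f 0) @[h --> 0^'+] --> d.
  move=> A /fd fA.
  have {}fA : \forall h \near 0, h != 0 -> 0 <= 0 + h -> A (h^-1 *: (f (0 + h) - f 0)) := fA.
  change (\forall h \near 0, 0 < h -> A (h^-1 *: (f (0 + h) - f 0))).
  by apply: filterS fA => h fAh h_gt0; apply: fAh; rewrite ?gt_eqF // add0r ltW.
have id0 : h @[h --> (0 : R)^'+] --> 0 by apply: cvg_within_filter; exact: cvg_id.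
have lim : f 0 + h *: (h^-1 *: (f (0 + h) - f 0)) @[h --> 0^'+] --> f 0 + 0 *: d.
  by apply: cvgD; [exact: cvg_cst | exact: cvgZ].
rewrite scale0r addr0 in lim; apply: cvg_trans _ lim; apply: near_eq_cvg; near=> h.
have h_neq0 : h != 0 by rewrite gt_eqF //; near: h; exact: nbhs_right_gt.
by rewrite scalerA mulfV // scale1r add0r addrC subrK.
Unshelve. all: by end_near. Qed.

Lemma is_derive0_const_nonneg (g : R -> R) :
  (forall t : R, 0 < t -> is_derive t 1 g 0) -> g x @[x --> 0^'+] --> g 0 ->
  forall t : R, 0 <= t -> g t = g 0.
Proof.
move=> g'0 g_cont0 t; rewrite le_eqVlt => /predU1P[<- // | t_gt0].
have [x|//|c _] := @MVT R g (fun=> 0) 0 t t_gt0.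
- by rewrite in_itv /= => /andP[x_gt0 _]; exact: g'0.
- apply: derivable_oo_LRcontinuous_within; split => //.
  + by move=> x; rewrite in_itv /= => /andP[x_gt0 _]; case: (g'0 x x_gt0).
  + have [g_der_t _] := g'0 t t_gt0.
    apply: cvg_at_left_filter; apply/differentiable_continuous/derivable1_diffP.
    exact: g_der_t.
- by rewrite mul0r => /eqP; rewrite subr_eq0 => /eqP.
Qed.

Lemma expR_linear_ode (g : R -> R) (c : R) :
  (forall t : R, 0 < t -> is_derive t 1 g (c * g t)) -> g x @[x --> 0^'+] --> g 0 ->
  forall t : R, 0 <= t -> g t = expR (c * t) * g 0.
Proof.
move=> g'E g_cont0 t t_ge0.
pose h (s : R) := expR (- c * s) * g s.
have h'0 (s : R) : 0 < s -> is_derive s 1 h 0.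
  move=> s_gt0.
  have lin : is_derive s 1 (fun u : R => - c * u) (- c).
    exact: is_derive_eq (is_deriveZ (- c) (is_derive_id s 1)) (mulr1 _).
  have exp' : is_derive s 1 (fun u => expR (- c * u)) (expR (- c * s) * - c).
    exact: is_derive1_comp lin.
  apply: is_derive_eq (is_deriveM exp' (g'E s s_gt0)) _.
  rewrite /GRing.scale /=; ring.
have h_cont0 : h x @[x --> 0^'+] --> h 0.
  apply: cvgM g_cont0; apply: cvg_at_right_filter.
  by apply: continuous_comp; [exact: cvgMr cvg_id | exact: continuous_expR].
have := is_derive0_const_nonneg h'0 h_cont0 t_ge0.
rewrite /h mulr0 expR0 mul1r => <-.
by rewrite mulrA -expRD mulNr addrN expR0 mul1r.
Qed.

End OneSidedDerivative.

Section MatrixCalculus.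
Variables (R : realType) (m p q : nat).

Lemma is_derive_mulmx_coord (f : R -> 'M[R]_(m, p)) (g : R -> 'M[R]_(p, q))
    (f' : 'M[R]_(m, p)) (g' : 'M[R]_(p, q)) (t : R) :
  (forall i j, is_derive t 1 (fun s => f s i j) (f' i j)) ->
  (forall i j, is_derive t 1 (fun s => g s i j) (g' i j)) ->
  forall i j, is_derive t 1 (fun s => (f s *m g s) i j) ((f' *m g t + f t *m g') i j).
Proof.
move=> df dg i j.
have -> : (fun s => (f s *m g s) i j) = \sum_(l < p) (fun s => f s i l * g s l j).
  by apply/funext => s; rewrite mxE fct_sumE.
apply: is_derive_eq (is_derive_sum (fun l => is_deriveM (df i l) (dg l j))) _.
rewrite !mxE -big_split /=; apply: eq_bigr => l _; rewrite /GRing.scale /=.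
by rewrite addrC mulrC [g t l j * _]mulrC.
Qed.

Lemma cvg_mulmx_coord (T : Type) (F : set_system T) (FF : Filter F)
    (f : T -> 'M[R]_(m, p)) (g : T -> 'M[R]_(p, q)) (a : 'M[R]_(m, p)) (b : 'M[R]_(p, q)) :
  (forall i j, f x i j @[x --> F] --> a i j) ->
  (forall i j, g x i j @[x --> F] --> b i j) ->
  forall i j, (f x *m g x) i j @[x --> F] --> (a *m b) i j.
Proof.
move=> fa gb i j; rewrite mxE; under eq_cvg do rewrite mxE.
apply: cvg_big => // [|l _]; [exact: add_continuous | exact: cvgM].
Qed.

End MatrixCalculus.

Lemma posdef_unitmx (R : realType) (m : nat) (M : 'M[R]_m) : posdef M -> M \in unitmx.
Proof.
case=> _ M_pos; rewrite unitmxE unitfE; apply/negP => /det0P[v v_neq0 vM].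
have := M_pos v^T; rewrite trmx_eq0 v_neq0 trmxK => /(_ isT).
by rewrite vM mul0mx mxE ltxx.
Qed.

Definition residual {R : realType} {k n : nat} (W : 'M[R]_(k, n)) (M : 'M[R]_k) :=
  W *m W^T - M *m M.

Lemma Lobj_residual (R : realType) (k n : nat) (W : 'M[R]_(k, n)) (M : 'M[R]_k) :
  Lobj W M = \tr (residual W M *m residual W M).
Proof. by []. Qed.

Lemma residual_flow (R : realType) (k n : nat) (A : 'M[R]_n) (W W' : 'M[R]_(k, n))
    (M M' : 'M[R]_k) :
  A^T = A -> M^T = M -> M \in unitmx ->
  (1 / 2) *: W' = invmx M *m W *m A - W ->
  (1 / 2) *: M' = invmx M *m W *m A *m W^T *m invmx M - M ->
  W' *m W^T + W *m W'^T - (M' *m M + M *m M') = (-4) *: residual W M.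
Proof.
move=> A_sym M_sym M_unit W'E M'E.
have half_inv (l : nat) (X Y : 'M[R]_(k, l)) : (1 / 2) *: X = Y -> X = 2 *: Y.
  by move=> <-; rewrite scalerA div1r mulfV ?pnatr_eq0 // scale1r.
rewrite (half_inv _ _ _ W'E) (half_inv _ _ _ M'E) /residual.
set Mi := invmx M; set P := Mi *m W *m A *m W^T.
have PT : P^T = W *m A *m W^T *m Mi.
  by rewrite !trmx_mul trmx_inv M_sym A_sym trmxK !mulmxA.
have W'WT : 2 *: (Mi *m W *m A - W) *m W^T = 2 *: (P - W *m W^T).
  by rewrite -scalemxAl mulmxBl.
have WW'T : W *m (2 *: (Mi *m W *m A - W))^T = 2 *: (P^T - W *m W^T).
  by rewrite PT linearZ /= -scalemxAr linearB /= mulmxBr !trmx_mul trmx_inv M_sym A_sym !mulmxA.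
have M'M : 2 *: (P *m Mi - M) *m M = 2 *: (P - M *m M).
  by rewrite -scalemxAl mulmxBl -mulmxA mulVmx // mulmx1.
have MM' : M *m (2 *: (P *m Mi - M)) = 2 *: (P^T - M *m M).
  by rewrite PT -scalemxAr mulmxBr !mulmxA mulmxV // mul1mx.
rewrite W'WT WW'T M'M MM'.
clearbody P; move: P^T (W *m W^T) (M *m M) => Q X Y.
by apply/matrixP => a b; rewrite !mxE; ring.
Qed.


Lemma residualE (R : realType) (k n : nat) (W : 'M[R]_(k, n)) (M : 'M[R]_k) i j :
  residual W M i j = (W *m W^T) i j - (M *m M) i j.
Proof. by rewrite /residual !mxE. Qed.

Section ResidualAlongSolution.
Variables (R : realType) (k n : nat) (A : 'M[R]_n).
Variables (W W' : R -> 'M[R]_(k, n)) (M M' : R -> 'M[R]_k).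
Hypothesis A_sym : A^T = A.
Hypothesis dW : forall t : R, 0 <= t -> has_deriv_nonneg W t (W' t).
Hypothesis dM : forall t : R, 0 <= t -> has_deriv_nonneg M t (M' t).
Hypothesis M_posdef : forall t : R, 0 <= t -> posdef (M t).
Hypothesis ode : forall t : R, 0 <= t ->
  (1 / 2) *: W' t = invmx (M t) *m W t *m A - W t /\
  (1 / 2) *: M' t = invmx (M t) *m W t *m A *m (W t)^T *m invmx (M t) - M t.

Lemma is_derive_residual_coord (t : R) i j : 0 < t ->
  is_derive t 1 (fun s => residual (W s) (M s) i j) (-4 * residual (W t) (M t) i j).
Proof.
move=> t_gt0.
have dWc a b : is_derive t 1 (fun s => W s a b) (W' t a b).
  exact/(has_deriv_nonneg_is_derive t_gt0)/has_deriv_nonneg_coord/dW/ltW.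
have dMc a b : is_derive t 1 (fun s => M s a b) (M' t a b).
  exact/(has_deriv_nonneg_is_derive t_gt0)/has_deriv_nonneg_coord/dM/ltW.
have dWTc a b : is_derive t 1 (fun s => (W s)^T a b) ((W' t)^T a b).
  have -> : (fun s => (W s)^T a b) = (fun s => W s b a) by apply/funext => s; rewrite mxE.
  by rewrite mxE.
have -> : (fun s => residual (W s) (M s) i j) =
    (fun s => (W s *m (W s)^T) i j) - (fun s => (M s *m M s) i j).
  by apply/funext => s; rewrite residualE.
apply: is_derive_eq (is_deriveB (is_derive_mulmx_coord dWc dWTc i j)
                                (is_derive_mulmx_coord dMc dMc i j)) _.
have [W'E M'E] := ode (ltW t_gt0).
have M_pd := M_posdef (ltW t_gt0).
move: (residual_flow A_sym (proj1 M_pd) (posdef_unitmx M_pd) W'E M'E).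
move=> /(congr1 (fun X : 'M[R]_k => X i j)) /=.
by rewrite [X in X = _ -> _]mxE [X in _ + X = _ -> _]mxE [X in _ = X -> _]mxE.
Qed.

Lemma residual_coord_cvg0 i j :
  residual (W t) (M t) i j @[t --> 0^'+] --> residual (W 0) (M 0) i j.
Proof.
have cW a b : W t a b @[t --> 0^'+] --> W 0 a b.
  exact/has_deriv_nonneg0_cvg/has_deriv_nonneg_coord/dW.
have cM a b : M t a b @[t --> 0^'+] --> M 0 a b.
  exact/has_deriv_nonneg0_cvg/has_deriv_nonneg_coord/dM.
have cWT a b : (W t)^T a b @[t --> 0^'+] --> (W 0)^T a b.
  by rewrite mxE; under eq_cvg do rewrite mxE; exact: cW.
under eq_cvg do rewrite residualE; rewrite residualE.
by apply: cvgB; apply: cvg_mulmx_coord.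
Qed.

End ResidualAlongSolution.

Lemma residual_decay (R : realType) (k n : nat) (A : 'M[R]_n) (W : R -> 'M[R]_(k, n))
    (M : R -> 'M[R]_k) :
  A^T = A -> is_solution A (1 / 2) W M ->
  forall t : R, 0 <= t -> residual (W t) (M t) = expR (-4 * t) *: residual (W 0) (M 0).
Proof.
move=> A_sym [W' [M' [[dW _] [[dM _] [M_posdef ode]]]]] t t_ge0.
apply/matrixP => i j; rewrite [RHS]mxE.
apply: (@expR_linear_ode _ (fun s => residual (W s) (M s) i j)) t_ge0.
- by move=> s; exact: is_derive_residual_coord A_sym dW dM M_posdef ode s i j.
- exact: residual_coord_cvg0 dW dM i j.
Qed.

Theorem lemma2 (R : realType) (n k : nat) (hk : (1 <= k)%N) (hkn : (k < n)%N)
  (A : 'M[R]_n) (hA : posdef A)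
  (W : R -> 'M[R]_(k, n)) (M : R -> 'M[R]_k)
  (hsol : is_solution A (1 / 2) W M) :
  forall t : R, 0 <= t ->
    Lobj (W t) (M t) = Lobj (W 0) (M 0) * expR (- 8 * t).
Proof.
move=> t t_ge0; rewrite !Lobj_residual (residual_decay (proj1 hA) hsol t_ge0).
rewrite -scalemxAl -scalemxAr scalerA mxtraceZ mulrC -expRD.
by congr (_ * expR _); ring.
Qed.
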